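(* Let $X$ be a real Banach space and $T:X\rightrightarrows X^*$ maximal monotone. For any $h\in\mathcal{F}_T$, $$\mathrm{cl}\,P_1D(h)=\mathrm{cl}\,\mathrm{conv}\,D(T),\qquad\mathrm{cl}_{w*}P_2D(h)=\mathrm{cl}_{w*}\mathrm{conv}\,R(T).$$
   Context: An operator $T:X\rightrightarrows X^*$ is a subset of $X\times X^*$ with $D(T)=P_1T$, $R(T)=P_2T$, where $P_1,P_2$ are the canonical projections onto $X$ and $X^*$. $T$ is monotone if $\langle x-y,x^*-y^*\rangle\geq0$ for all $(x,x^* ),(y,y^* )\in T$, and maximal monotone if it is monotone and not properly contained in another monotone operator. $\mathcal{F}_T$ is the set of all convex lower semicontinuous $h:X\times X^*\to\mathbb{R}\cup\{\pm\infty\}$ with $h(x,x^* )\geq\langle x,x^*\rangle$ for all $(x,x^* )$ and $h(x,x^* )=\langle x,x^*\rangle$ on $T$. $D(h)=\{z\;|\;h(z)<\infty\}$. $\mathrm{cl}$ is norm closure in $X$, $\mathrm{cl}_{w*}$ weak-$*$ closure in $X^*$, $\mathrm{conv}$ convex hull. *)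

From HB Require Import structures.
From mathcomp Require Import all_boot all_order all_algebra.
From mathcomp Require Import all_classical all_reals all_analysis.
Set Implicit Arguments. Unset Strict Implicit. Unset Printing Implicit Defensive.
Import Order.TTheory GRing.Theory Num.Theory.
Import numFieldNormedType.Exports.
Local Open Scope classical_set_scope.
Local Open Scope ring_scope.

Section Defs.
Variables (R : realType) (X : normedModType R).

(* The topological dual X^*: elements are represented as functions X -> R
   that are linear and (norm-)continuous. The duality pairing <x, f> is f x. *)
Definition is_dual (f : X -> R) : Prop :=
  (forall (a : R) (x y : X), f (a *: x + y) = a * f x + f y) /\ continuous f.

(* ||f - g||_{X^*} < d  (operator norm), unfolded:
   there is d' < d with |f x - g x| <= d' ||x|| for all x. *)
Definition dual_dist_lt (f g : X -> R) (d : R) : Prop :=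
  exists d' : R, d' < d /\ forall x : X, `|f x - g x| <= d' * `|x|.

Definition operator := X -> (X -> R) -> Prop.

Definition is_operator (T : operator) : Prop :=
  forall x f, T x f -> is_dual f.

Definition monotone (T : operator) : Prop :=
  forall x f y g, T x f -> T y g -> 0 <= f (x - y) - g (x - y).

Definition maximal_monotone (T : operator) : Prop :=
  is_operator T /\ monotone T /\
  forall S : operator, is_operator S -> monotone S ->
    (forall x f, T x f -> S x f) -> forall x f, S x f -> T x f.

Definition dom_op (T : operator) : set X := [set x | exists f, T x f].
Definition range_op (T : operator) : set (X -> R) := [set f | exists x, T x f].

(* h : X x X^* -> R u {+oo,-oo}, convex (epigraph definition). *)
Definition convex_on_XXs (h : X -> (X -> R) -> \bar R) : Prop :=
  forall x1 f1 x2 f2 (a1 a2 t : R),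
    is_dual f1 -> is_dual f2 -> 0 <= t -> t <= 1 ->
    (h x1 f1 <= a1%:E)%E -> (h x2 f2 <= a2%:E)%E ->
    (h (t *: x1 + (1 - t) *: x2)%R (fun y => t * f1 y + (1 - t) * f2 y)%R
       <= (t * a1 + (1 - t) * a2)%R%:E)%E.

Definition lsc_on_XXs (h : X -> (X -> R) -> \bar R) : Prop :=
  forall x f (a : R), is_dual f -> (a%:E < h x f)%E ->
    exists2 d : R, 0 < d & forall y g, is_dual g ->
      `|y - x| < d -> dual_dist_lt g f d -> (a%:E < h y g)%E.

Definition fitzpatrick_family (T : operator) (h : X -> (X -> R) -> \bar R) :
  Prop :=
  convex_on_XXs h /\ lsc_on_XXs h /\
  (forall x f, is_dual f -> ((f x)%:E <= h x f)%E) /\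
  (forall x f, T x f -> h x f = (f x)%:E).

Definition P1_dom (h : X -> (X -> R) -> \bar R) : set X :=
  [set x | exists f, is_dual f /\ (h x f < +oo)%E].
Definition P2_dom (h : X -> (X -> R) -> \bar R) : set (X -> R) :=
  [set f | is_dual f /\ exists x, (h x f < +oo)%E].

Definition conv_hull (A : set X) : set X :=
  [set x | exists n (w : 'I_n -> R) (p : 'I_n -> X),
     (forall i, 0 <= w i) /\ \sum_i w i = 1 /\ (forall i, A (p i)) /\
     x = \sum_i w i *: p i].

Definition conv_hull_dual (B : set (X -> R)) : set (X -> R) :=
  [set f | exists n (w : 'I_n -> R) (g : 'I_n -> (X -> R)),
     (forall i, 0 <= w i) /\ \sum_i w i = 1 /\ (forall i, B (g i)) /\
     forall y, f y = \sum_i w i * g i y].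

(* weak-* closure in X^*: f in X^* such that every basic weak-* neighbourhood
   {g | |g x_k - f x_k| < e, k < n} meets B *)
Definition wstar_closure (B : set (X -> R)) : set (X -> R) :=
  [set f | is_dual f /\
     forall n (xs : 'I_n -> X) (e : R), 0 < e ->
       exists g, B g /\ forall k, `|g (xs k) - f (xs k)| < e].

End Defs.

From HB Require Import structures.
From mathcomp Require Import all_boot all_order all_algebra.
From mathcomp Require Import all_classical all_reals all_analysis.
From mathcomp.algebra_tactics Require Import ring lra.
Import Order.TTheory GRing.Theory Num.Theory.
Import numFieldNormedType.Exports.
Local Open Scope classical_set_scope.
Local Open Scope ring_scope.

(* For (y, g) in T and a point (x0, f0) where h takes a finite value M, the
   convexity of h on the segment joining them, together with h >= <.,.>, gives
   the gap inequality <x0 - y, f0 - g> >= <x0, f0> - M.  Conversely h is finite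
   at convex combinations of points of T, so conv D(T) <= P1 D(h) and
   conv R(T) <= P2 D(h).  If x0 in P1 D(h) lay at distance r > 0 from conv D(T),
   Hahn-Banach would give a functional l of norm <= 1 with l c + r <= l x0 on
   that hull; by the gap inequality (x0, f0 + ((M - <x0, f0>) / r) l) is then
   monotonically related to T, so x0 in D(T) by maximality: a contradiction.
   The weak-* statement is the same argument run in R^n through the evaluations
   at finitely many points: there the separating functional is evaluation at
   some w in X, and the perturbation moves x0 along w instead of moving f0. *)

(** * Convexity, linear functionals and the Hahn-Banach theorem *)

Definition cvx_fun {R : realType} {V : lmodType R} (G : V -> R) :=
  forall (t : R) a b, 0 <= t -> t <= 1 ->
    G (t *: a + (1 - t) *: b) <= t * G a + (1 - t) * G b.

Definition cvx_set {R : realType} {V : lmodType R} (C : set V) :=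
  forall (t : R) a b, 0 <= t -> t <= 1 -> C a -> C b -> C (t *: a + (1 - t) *: b).

Section LinearFun.
Context {R : realType} {V : lmodType R}.

Definition linear_fun (l : V -> R) :=
  forall (a : R) x y, l (a *: x + y) = a * l x + l y.

Context {l : V -> R} (l_lin : linear_fun l).

Lemma linear_fun0 : l 0 = 0.
Proof.
have := l_lin 1 0 0; rewrite scale1r addr0 mul1r => ll.
by apply: (addrI (l 0)); rewrite -ll addr0.
Qed.

Lemma linear_funD x y : l (x + y) = l x + l y.
Proof. by have := l_lin 1 x y; rewrite scale1r mul1r. Qed.

Lemma linear_funZ (a : R) x : l (a *: x) = a * l x.
Proof. by have := l_lin a x 0; rewrite !addr0 linear_fun0 addr0. Qed.

Lemma linear_funB x y : l (x - y) = l x - l y.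
Proof. by rewrite linear_funD -scaleN1r linear_funZ mulN1r. Qed.

Lemma linear_fun_sum n (c : 'I_n -> R) (v : 'I_n -> V) :
  l (\sum_i c i *: v i) = \sum_i c i * l (v i).
Proof.
elim: n c v => [|n IH] c v; first by rewrite !big_ord0 linear_fun0.
by rewrite !big_ord_recr /= linear_funD linear_funZ IH.
Qed.

End LinearFun.

Section Subspaces.
Context {R : realType} {V : lmodType R}.

Definition subspace (L : set V) :=
  L 0 /\ forall (a : R) x y, L x -> L y -> L (a *: x + y).

Definition linear_on (L : set V) (f : V -> R) :=
  forall (a : R) x y, L x -> L y -> f (a *: x + y) = a * f x + f y.

Lemma subspaceD {L x y} : subspace L -> L x -> L y -> L (x + y).
Proof. by move=> [_ LS] Lx Ly; have := LS 1 x y Lx Ly; rewrite scale1r. Qed.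

Lemma subspaceZ {L} (a : R) {x} : subspace L -> L x -> L (a *: x).
Proof. by move=> [L0 LS] Lx; have := LS a x 0 Lx L0; rewrite addr0. Qed.

Lemma subspaceB {L x y} : subspace L -> L x -> L y -> L (x - y).
Proof.
by move=> sL Lx Ly; rewrite -scaleN1r; apply: subspaceD => //; apply: subspaceZ.
Qed.

Section LinearOn.
Context {L : set V} {f : V -> R}.
Hypotheses (sL : subspace L) (fL : linear_on L f).

Lemma linear_on0 : f 0 = 0.
Proof.
have [L0 _] := sL; have := fL 1 0 0 L0 L0; rewrite scale1r addr0 mul1r => ff.
by apply: (addrI (f 0)); rewrite -ff addr0.
Qed.

Lemma linear_onD {x y} : L x -> L y -> f (x + y) = f x + f y.
Proof. by move=> Lx Ly; have := fL 1 x y Lx Ly; rewrite scale1r mul1r. Qed.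

Lemma linear_onZ (a : R) {x} : L x -> f (a *: x) = a * f x.
Proof.
by move=> Lx; have := fL a x 0 Lx sL.1; rewrite addr0 linear_on0 addr0.
Qed.

End LinearOn.

Definition line_span (L : set V) (v : V) :=
  [set x | exists z c, L z /\ x = z + c *: v].

Section LineSpan.
Context {L : set V} {v : V}.
Hypotheses (sL : subspace L) (Lv : ~ L v).

Lemma line_span_subspace : subspace (line_span L v).
Proof.
split; first by exists 0, 0; split; [exact: sL.1 | rewrite scale0r addr0].
move=> a _ _ [z1 [c1 [Lz1 ->]]] [z2 [c2 [Lz2 ->]]].
exists (a *: z1 + z2), (a * c1 + c2); split; first exact: sL.2.
by rewrite scalerDr scalerA scalerDl addrACA.
Qed.

Lemma line_span_uniq {z c z' c'} : L z -> L z' ->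
  z + c *: v = z' + c' *: v -> z = z' /\ c = c'.
Proof.
move=> Lz Lz' e.
have e2 : (c - c') *: v = z' - z.
  by rewrite scalerBl; apply/eqP; rewrite subr_eq addrAC -e addrAC subrr add0r.
have cc' : c = c'.
  apply: contrapT => /eqP cc'; apply: Lv.
  have -> : v = (c - c')^-1 *: (z' - z) by rewrite -e2 scalerA mulVf ?scale1r ?subr_eq0.
  exact: subspaceZ _ sL (subspaceB sL Lz' Lz).
by split => //; subst c'; apply: (addIr (c *: v)).
Qed.

Lemma line_extension (f : V -> R) (alpha : R) :
  exists f', forall z c, L z -> f' (z + c *: v) = f z + c * alpha.
Proof.
pose rep x (p : V * R) := L p.1 /\ x = p.1 + p.2 *: v.
exists (fun x => let p := xget (0, 0) (rep x) in f p.1 + p.2 * alpha) => z c Lz /=.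
case: xgetP => [[z' c'] _ [/= Lz' e]|/(_ (z, c))[]//].
by have [-> ->] := line_span_uniq Lz Lz' e.
Qed.

End LineSpan.
End Subspaces.

Definition dominated {R : realType} {V : lmodType R} (G : V -> R) (L : set V)
    (f : V -> R) :=
  [/\ subspace L, linear_on L f & forall x, L x -> f x <= G x].

Section DominatedExtension.
Context {R : realType} {V : lmodType R} {G : V -> R}.
Hypothesis G_convex : cvx_fun G.

Context {L : set V} {f : V -> R} (v : V).
Hypothesis fG : dominated G L f.

Lemma dominated_slope_le {z1 z2 s t} : L z1 -> L z2 -> 0 < s -> 0 < t ->
  s * f z2 + t * f z1 <= s * G (z2 - t *: v) + t * G (z1 + s *: v).
Proof.
move=> Lz1 Lz2 s0 t0; have [sL fL fle] := fG.
have st0 : 0 < s + t by rewrite addr_gt0.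
(* [w] below lies in [L] and is also the [s : t] average of [z2 - t v] and
   [z1 + s v]. *)
pose l := s / (s + t).
have hs : (s + t) * l = s by rewrite mulrC divfK ?gt_eqF.
have ht : (s + t) * (1 - l) = t by rewrite mulrBr mulr1 hs addrAC subrr add0r.
have l0 : 0 <= l by rewrite divr_ge0 ?ltW.
have l1 : l <= 1 by rewrite ler_pdivrMr // mul1r lerDl ltW.
clearbody l.
pose w := l *: z2 + (1 - l) *: z1.
have fw : (s + t) * f w = s * f z2 + t * f z1.
  rewrite (linear_onD fL) ?(linear_onZ sL fL) ?mulrDr ?mulrA ?hs ?ht //.
  exact: subspaceZ _ sL Lz2.
  exact: subspaceZ _ sL Lz1.
have ew : w = l *: (z2 - t *: v) + (1 - l) *: (z1 + s *: v).
  have lt : (1 - l) * s = l * t.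
    by apply: (mulfI (lt0r_neq0 st0)); rewrite !mulrA ht hs mulrC.
  by rewrite /w !scalerDr scalerN !scalerA lt addrACA addNr addr0.
rewrite -fw; apply: le_trans (ler_wpM2l (ltW st0) (fle w _)) _.
  exact: sL.2 _ _ _ Lz2 (subspaceZ _ sL Lz1).
rewrite ew; apply: le_trans (ler_wpM2l (ltW st0) (G_convex l _ _ l0 l1)) _.
by rewrite mulrDr !mulrA hs ht.
Qed.

Lemma dominated_slope_exists : exists alpha, forall z c, L z -> 0 < c ->
  f z - G (z - c *: v) <= c * alpha /\ c * alpha <= G (z + c *: v) - f z.
Proof.
pose A := [set a | exists z t, [/\ L z, 0 < t & a = (f z - G (z - t *: v)) / t]].
pose B := [set b | exists z s, [/\ L z, 0 < s & b = (G (z + s *: v) - f z) / s]].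
have L0 : L 0 by case: fG => -[].
have A0 : A ((f 0 - G (0 - 1 *: v)) / 1) by exists 0, 1.
have B0 : B ((G (0 + 1 *: v) - f 0) / 1) by exists 0, 1.
have AB a b : A a -> B b -> a <= b.
  move=> [z2 [t [Lz2 t0 ->]]] [z1 [s [Lz1 s0 ->]]].
  rewrite ler_pdivrMr // mulrAC ler_pdivlMr //.
  have := dominated_slope_le Lz1 Lz2 s0 t0; lra.
have Aub : has_ubound A by exists ((G (0 + 1 *: v) - f 0) / 1) => a /AB; apply.
exists (sup A) => z c Lz c0; split.
  have : (f z - G (z - c *: v)) / c <= sup A by apply: ub_le_sup Aub _ _; exists z, c.
  by rewrite ler_pdivrMr // mulrC.
have : sup A <= (G (z + c *: v) - f z) / c.
  by apply: ge_sup; [exact: ex_intro _ _ A0 | move=> a /AB; apply; exists z, c].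
by rewrite ler_pdivlMr // mulrC.
Qed.

Lemma dominated_extension_step : ~ L v ->
  exists f', dominated G (line_span L v) f' /\ forall x, L x -> f' x = f x.
Proof.
move=> Lv; have [sL fL fle] := fG.
have [alpha alphaP] := dominated_slope_exists.
have [f' f'E] := line_extension sL Lv f alpha.
exists f'; split; last first.
  by move=> x Lx; have := f'E x 0 Lx; rewrite scale0r addr0 mul0r addr0.
split; first exact: line_span_subspace.
  move=> a _ _ [z1 [c1 [Lz1 ->]]] [z2 [c2 [Lz2 ->]]].
  have Lz : L (a *: z1 + z2) by exact: sL.2.
  rewrite (_ : _ + _ = (a *: z1 + z2) + (a * c1 + c2) *: v); last first.
    by rewrite scalerDr scalerA scalerDl addrACA.
  by rewrite !f'E // fL //; ring.
move=> _ [z [c [Lz ->]]]; rewrite f'E //.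
case: (ltgtP c 0) => [c0|c0|->]; last by rewrite scale0r addr0 mul0r addr0 fle.
- have nc0 : 0 < - c by rewrite oppr_gt0.
  by have [+ _] := alphaP z (- c) Lz nc0; rewrite scaleNr opprK; lra.
- by have [_ +] := alphaP z c Lz c0; lra.
Qed.

End DominatedExtension.

Section HahnBanachTheorem.
Context {R : realType} {V : lmodType R} {G : V -> R}.

Definition extends (p q : set V * (V -> R)) :=
  p.1 `<=` q.1 /\ forall x, p.1 x -> q.2 x = p.2 x.

Lemma dominated_chain_ub (A : set (set V * (V -> R))) p0 :
  A p0 -> (forall p, A p -> dominated G p.1 p.2) ->
  (forall p q, A p -> A q -> extends p q \/ extends q p) ->
  exists2 q, dominated G q.1 q.2 & forall p, A p -> extends p q.
Proof.
move=> Ap0 Adom Atot.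
pose L := [set x | exists2 p, A p & p.1 x].
have two x y : L x -> L y -> exists2 p, A p & p.1 x /\ p.1 y.
  move=> [p Ap px] [q Aq qy].
  by case: (Atot _ _ Ap Aq) => -[pq _];
    [exists q | exists p] => //; split=> //; exact: pq.
pose f x := (xget p0 [set p | A p /\ p.1 x]).2 x.
have fE p x : A p -> p.1 x -> f x = p.2 x.
  move=> Ap px; rewrite /f; case: xgetP => [q _ [Aq qx]|/(_ p)[]//].
  by case: (Atot _ _ Ap Aq) => -[_ e]; rewrite e.
exists (L, f); last by move=> p Ap; split=> [x px|x px]; [exists p | exact: fE].
split.
- split; first by exists p0 => //; case: (Adom _ Ap0) => -[].
  move=> a x y Lx Ly; have [p Ap [px py]] := two _ _ Lx Ly.
  by exists p => //; case: (Adom _ Ap) => -[_ +] _ _; apply.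
- move=> a x y Lx Ly; have [p Ap [px py]] := two _ _ Lx Ly.
  have [[_ pS] pL _] := Adom _ Ap.
  by rewrite /= !(fE p) //; [exact: pL | exact: pS].
- move=> x [p Ap px]; rewrite /= (fE p) //.
  by have [_ _ +] := Adom _ Ap; apply.
Qed.

Hypothesis G_convex : cvx_fun G.

Theorem hahn_banach : G 0 = 0 -> exists2 l : V -> R, linear_fun l & forall x, l x <= G x.
Proof.
move=> G0.
pose T := {p : set V * (V -> R) | dominated G p.1 p.2}.
have dom0 : dominated G [set 0] (fun=> 0).
  split; first by split=> // a x y -> ->; rewrite scaler0 addr0.
    by move=> *; rewrite mulr0 addr0.
  by move=> x ->; rewrite G0.
pose t0 : T := exist _ ([set 0], fun=> 0) dom0.
have [|||t tmax] := @ZL_preorder T t0 (fun p q => `[< extends (sval p) (sval q) >]).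
- by move=> p; apply/asboolP; split.
- move=> p q r /asboolP[pq1 pq2] /asboolP[qr1 qr2]; apply/asboolP.
  by split=> [x /pq1/qr1 //|x px]; rewrite qr2 ?pq2 //; exact: pq1.
- move=> A Atot; have [[p Ap]|nA] := pselect (exists p, A p); last first.
    by exists t0 => p Ap; case: nA; exists p.
  have [|||q domq qub] := dominated_chain_ub [set sval p | p in A] (sval p).
  + by exists p.
  + by move=> _ [r _ <-]; exact: (svalP r).
  + move=> _ _ [r Ar <-] [s As <-].
    by case: (Atot _ _ Ar As) => /asboolP; [left | right].
  by exists (exist _ q domq : T) => r Ar; apply/asboolP/qub; exists r.
case: t tmax => -[L f] /= domf tmax.
have fullL x : L x.
  apply: contrapT => Lx.
  have [f' [domf' f'f]] := dominated_extension_step G_convex x domf Lx.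
  have ext : extends (L, f) (line_span L x, f').
    by split=> // y Ly; exists y, 0; rewrite scale0r addr0.
  have /asboolP[/= sub _] := tmax (exist _ (_, f') domf' : T) (asboolT ext).
  apply: Lx; apply: sub.
  by exists 0, 1; rewrite add0r scale1r; split=> //; case: (domf) => -[].
have [_ fL fG] := domf; exists f => [a x y|x]; [exact: fL | exact: fG].
Qed.

End HahnBanachTheorem.

(** * Convex hulls and separation *)

Section ConvexHull.
Context {R : realType} {V : lmodType R}.

Definition convex_hull (A : set V) : set V :=
  [set x | exists n (w : 'I_n -> R) (p : 'I_n -> V),
     (forall i, 0 <= w i) /\ \sum_i w i = 1 /\ (forall i, A (p i)) /\
     x = \sum_i w i *: p i].

Lemma sub_convex_hull {A : set V} : A `<=` convex_hull A.
Proof.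
move=> x Ax; exists 1, (fun=> 1), (fun=> x).
by rewrite !big_ord1 scale1r.
Qed.

Lemma convex_hull_cvx (A : set V) : cvx_set (convex_hull A).
Proof.
move=> t _ _ t0 t1 [n1 [w1 [p1 [w10 [w11 [Ap1 ->]]]]]]
  [n2 [w2 [p2 [w20 [w21 [Ap2 ->]]]]]].
pose w (i : 'I_(n1 + n2)) :=
  match fintype.split i with inl j => t * w1 j | inr j => (1 - t) * w2 j end.
pose p (i : 'I_(n1 + n2)) :=
  match fintype.split i with inl j => p1 j | inr j => p2 j end.
have wl j : w (lshift n2 j) = t * w1 j by rewrite /w (unsplitK (inl j)).
have wr j : w (rshift n1 j) = (1 - t) * w2 j by rewrite /w (unsplitK (inr j)).
have pl j : p (lshift n2 j) = p1 j by rewrite /p (unsplitK (inl j)).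
have pr j : p (rshift n1 j) = p2 j by rewrite /p (unsplitK (inr j)).
exists (n1 + n2), w, p; split.
  move=> i; rewrite /w; case: fintype.split => j; apply: mulr_ge0 => //.
  by rewrite subr_ge0.
split.
  rewrite big_split_ord /=; under eq_bigr do rewrite wl.
  under [X in _ + X]eq_bigr do rewrite wr.
  by rewrite -!mulr_sumr w11 w21 !mulr1 subrKC.
split; first by move=> i; rewrite /p; case: fintype.split.
rewrite big_split_ord /= !scaler_sumr; congr (_ + _); apply: eq_bigr => i _.
  by rewrite wl pl scalerA.
by rewrite wr pr scalerA.
Qed.

Lemma convex_hull_min (A : set V) {S : set V} :
  cvx_set S -> A `<=` S -> convex_hull A `<=` S.
Proof.
move=> S_cvx AS _ [n [w [p [w0 [w1 [Ap ->]]]]]].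
elim: n w p w0 w1 Ap => [|n IH] w p w0 w1 Ap.
  by move: w1; rewrite big_ord0 => /eqP; rewrite eq_sym oner_eq0.
pose w' (i : 'I_n) := w (lift ord0 i).
have sw' : \sum_i w' i = 1 - w ord0 by rewrite -w1 big_ord_recl addrAC subrr add0r.
have sw'_ge0 : 0 <= \sum_i w' i by apply: sumr_ge0 => i _; exact: w0.
have w0_le1 : w ord0 <= 1 by rewrite -subr_ge0 -sw'.
rewrite big_ord_recl.
have [s0|s_neq0] := eqVneq (\sum_i w' i) 0.
  have w'0 i : w' i = 0 by apply: (psumr_eq0P _ s0) => // j _; exact: w0.
  rewrite big1 => [|i _]; last by rewrite -/(w' i) w'0 scale0r.
  have -> : w ord0 = 1 by move: sw'; rewrite s0; lra.
  by rewrite addr0 scale1r; apply: AS.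
have s_gt0 : 0 < \sum_i w' i by rewrite lt_def s_neq0.
have -> : \sum_i w (lift ord0 i) *: p (lift ord0 i) =
    (1 - w ord0) *: \sum_i (w' i / (1 - w ord0)) *: p (lift ord0 i).
  rewrite scaler_sumr; apply: eq_bigr => i _; rewrite scalerA.
  by rewrite mulrC divfK // -sw'.
apply: S_cvx => //; first by apply: AS.
apply: IH => [i||i]; last exact: Ap.
  by rewrite divr_ge0 ?w0 // -sw'.
by rewrite -mulr_suml -sw' divff // gt_eqF.
Qed.

End ConvexHull.

Section Separation.
Context {R : realType} {V : lmodType R} (N : V -> R) (C : set V).
Hypotheses (N_ge0 : forall x, 0 <= N x) (N_add : forall x y, N (x + y) <= N x + N y)
  (N_scale : forall (t : R) x, 0 <= t -> N (t *: x) = t * N x).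
Hypotheses (C_cvx : cvx_set C) (C0 : C !=set0).

Let dist_to x := inf [set N (x - c) | c in C].

Let dist_to_ne0 x : [set N (x - c) | c in C] !=set0.
Proof. by case: C0 => c Cc; exists (N (x - c)), c. Qed.

Let dist_to_lb x : has_lbound [set N (x - c) | c in C].
Proof. by exists 0 => _ [c _ <-]. Qed.

Let dist_to_le x {c} : C c -> dist_to x <= N (x - c).
Proof. by move=> Cc; apply: (ge_inf (dist_to_lb x)); exists c. Qed.

Let dist_to_ge {x y} : (forall c, C c -> y <= N (x - c)) -> y <= dist_to x.
Proof. by move=> h; apply: lb_le_inf (dist_to_ne0 x) _ => _ [c Cc <-]; exact: h. Qed.

Let dist_to_cvx : cvx_fun dist_to.
Proof.
move=> t a b t0 t1; apply/ler_addgt0Pr => e e0.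
have [_ [c1 C1 <-] ac1] := inf_adherent e0 (conj (dist_to_ne0 a) (dist_to_lb a)).
have [_ [c2 C2 <-] bc2] := inf_adherent e0 (conj (dist_to_ne0 b) (dist_to_lb b)).
have t1' : 0 <= 1 - t by rewrite subr_ge0.
apply: le_trans (dist_to_le _ (C_cvx _ _ _ t0 t1 C1 C2)) _.
have -> : t *: a + (1 - t) *: b - (t *: c1 + (1 - t) *: c2) =
          t *: (a - c1) + (1 - t) *: (b - c2) by rewrite !scalerBr opprD addrACA.
apply: le_trans (N_add _ _) _; rewrite !N_scale //.
have -> : t * dist_to a + (1 - t) * dist_to b + e =
          t * (dist_to a + e) + (1 - t) * (dist_to b + e) by ring.
by apply: lerD; apply: ler_wpM2l; rewrite // ltW.
Qed.

Let dist_toD x z : dist_to (x + z) <= dist_to x + N z.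
Proof.
rewrite -lerBlDr; apply: dist_to_ge => c Cc; rewrite lerBlDr.
by apply: le_trans (dist_to_le _ Cc) _; rewrite addrAC; exact: N_add.
Qed.

Lemma separation p r : 0 < r -> (forall c, C c -> r <= N (p - c)) ->
  exists l : V -> R, [/\ linear_fun l,
    forall z, l z <= N z & forall c, C c -> l c + r <= l p].
Proof.
move=> r0 hr.
(* Hahn-Banach under [z |-> d (p + z) - d p], with [d] the [N]-distance to [C]. *)
pose G z := dist_to (p + z) - dist_to p.
have G_cvx : cvx_fun G.
  move=> t a b t0 t1; rewrite /G.
  have -> : p + (t *: a + (1 - t) *: b) = t *: (p + a) + (1 - t) *: (p + b).
    by rewrite !scalerDr addrACA -scalerDl subrKC scale1r.
  have := dist_to_cvx t (p + a) (p + b) t0 t1; lra.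
have G0 : G 0 = 0 by rewrite /G addr0 subrr.
have [l l_lin lG] := hahn_banach G_cvx G0.
exists l; split=> // [z|c Cc].
  by apply: le_trans (lG z) _; rewrite /G lerBlDl; exact: dist_toD.
have := lG (c - p); rewrite (linear_funB l_lin) /G [p + _]addrC subrK.
have := dist_to_le c Cc; rewrite subrr.
have N0 : N 0 = 0 by rewrite -(scale0r 0) N_scale // mul0r.
have := dist_to_ge hr; rewrite N0; lra.
Qed.

End Separation.

Lemma normed_separation {R : realType} {V : normedModType R} {C : set V} {p r} :
  cvx_set C -> C !=set0 -> 0 < r -> (forall c, C c -> r <= `|p - c|) ->
  exists l : V -> R, [/\ linear_fun l,
    forall z, l z <= `|z| & forall c, C c -> l c + r <= l p].
Proof.
move=> C_cvx C0; apply: separation => // [x y|t x t0]; first exact: ler_normD.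
by rewrite normrZ ger0_norm.
Qed.

(** * Normed spaces and their duals *)

Lemma row_entry_le_norm {R : realType} {n} (v : 'rV[R]_n) k : `|v 0 k| <= `|v|.
Proof. by rewrite [X in _ <= X]mx_normrE; apply: le_trans (le_bigmax _ _ (0, k)). Qed.

Lemma not_closure_dist {R : realType} {V : normedModType R} (C : set V) x :
  ~ closure C x -> exists2 r, 0 < r & forall c, C c -> r <= `|x - c|.
Proof.
move=> /existsNP[B /not_implyP[/nbhs_ballP[r r0 rB] CB]].
exists r => // c Cc; rewrite leNgt; apply/negP => xc.
by apply: CB; exists c; split=> //; apply: rB; rewrite -ball_normE.
Qed.

Lemma fst_sum {R : realType} {U W : lmodType R} n (F : 'I_n -> U * W) :
  (\sum_i F i).1 = \sum_i (F i).1.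
Proof. exact: (big_morph fst (fun _ _ => erefl) erefl). Qed.

Lemma snd_sum {R : realType} {U W : lmodType R} n (F : 'I_n -> U * W) :
  (\sum_i F i).2 = \sum_i (F i).2.
Proof. exact: (big_morph snd (fun _ _ => erefl) erefl). Qed.

Section Dual.
Context {R : realType} {X : normedModType R}.
Implicit Types (f g : X -> R) (x y : X).

Lemma dual_comb (a b : R) {f g} : is_dual f -> is_dual g ->
  is_dual (fun y => a * f y + b * g y).
Proof.
move=> df dg; split=> [c x y|x].
  rewrite !(linear_funD df.1) !(linear_funZ df.1).
  by rewrite !(linear_funD dg.1) !(linear_funZ dg.1); ring.
apply: (continuousD (f := fun y => a * f y) (g := fun y => b * g y)).
  by apply: (continuousM (s := fun=> a) (t := f)); [exact: cst_continuous | exact: df.2].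
by apply: (continuousM (s := fun=> b) (t := g)); [exact: cst_continuous | exact: dg.2].
Qed.

Lemma lipschitz1_continuous f : (forall x y, `|f x - f y| <= `|x - y|) -> continuous f.
Proof.
move=> f_lip x; apply/(@cvgrPdist_lt _ _ _ (nbhs x)) => e e0.
near=> z; apply: le_lt_trans (f_lip x z) _.
by near: z; apply: cvgr_dist_lt.
Unshelve. all: by end_near. Qed.

Lemma is_dual_le_norm {f} : linear_fun f -> (forall x, f x <= `|x|) -> is_dual f.
Proof.
move=> f_lin f_le; have fB := linear_funB f_lin.
split=> //; apply: lipschitz1_continuous => x y.
by rewrite -fB ler_norml f_le andbT lerNl fB opprB -fB (le_trans (f_le _)) // distrC.
Qed.

Lemma conv_hull_dualE (B : set (X -> R)) : conv_hull_dual B = convex_hull B.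
Proof.
apply/seteqP; split=> f [n [w [g [w0 [w1 [Bg fE]]]]]]; exists n, w, g; do !split=> //.
  by rewrite fct_sumE; apply/funext.
by move=> y; rewrite fE fct_sumE.
Qed.

End Dual.

(** * Maximal monotone operators and the Fitzpatrick family *)

Lemma le0_of_le_small_mul {R : realType} (K c : R) :
  (forall t, 0 < t -> t <= 1 -> K <= t * c) -> K <= 0.
Proof.
move=> Kc; apply/ler_addgt0Pr => e e0; rewrite add0r.
have d0 : 0 < e + `|c| + 1 by rewrite -addrA addr_gt0 // ltr_wpDl.
pose t := e / (e + `|c| + 1).
have t0 : 0 < t by rewrite divr_gt0.
have t1 : t <= 1 by rewrite ler_pdivrMr // mul1r -addrA lerDl addr_ge0.
apply: le_trans (Kc t t0 t1) (le_trans (ler_wpM2l (ltW t0) (ler_norm c)) _).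
rewrite /t mulrAC ler_pdivrMr // ler_pM2l //.
by have := normr_ge0 c; lra.
Qed.

Section MaximalMonotone.
Context {R : realType} {X : normedModType R} {T : operator X}.
Hypothesis T_max : maximal_monotone T.

Lemma maximal_monotone_extend {x0 k} : is_dual k ->
  (forall y g, T y g -> 0 <= k (x0 - y) - g (x0 - y)) -> T x0 k.
Proof.
move=> dk hk; have [T_op [T_mon T_maxl]] := T_max.
pose S x f := T x f \/ (x = x0 /\ f = k).
apply: (T_maxl S) => [x f [/T_op //|[_ ->] //]|x f y g| |]; [ | by left | by right].
move=> [Txf|[-> ->]] [Tyg|[-> ->]].
- exact: T_mon.
- have := hk _ _ Txf; have fB := linear_funB (T_op _ _ Txf).1.
  by rewrite !(linear_funB dk.1) !fB; lra.
- exact: hk.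
- by rewrite subrr.
Qed.

Lemma maximal_monotone_neq0 : exists x f, T x f.
Proof.
have [//|T0] := pselect (exists x f, T x f).
exists 0, (fun=> 0); apply: maximal_monotone_extend => [|y g Tyg]; last first.
  by case: T0; exists y, g.
by apply: is_dual_le_norm => // a x y; rewrite mulr0 addr0.
Qed.

End MaximalMonotone.

Section Fitzpatrick.
Context {R : realType} {X : normedModType R} {T : operator X}
  {h : X -> (X -> R) -> \bar R}.
Hypotheses (T_op : is_operator T) (h_fitz : fitzpatrick_family T h).

Lemma fitzpatrick_finite {x f} : is_dual f -> (h x f < +oo)%E ->
  exists2 M : R, h x f = M%:E & f x <= M.
Proof.
have [_ [_ [h_ge _]]] := h_fitz; move=> df.
by have := h_ge x f df; case: (h x f) => // M; exists M.
Qed.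

Lemma fitzpatrick_gap {x0 f0} {M : R} {y g} :
  is_dual f0 -> h x0 f0 = M%:E -> T y g -> f0 x0 - M <= f0 (x0 - y) - g (x0 - y).
Proof.
have [h_cvx [_ [h_ge h_T]]] := h_fitz; move=> df0 hM Tyg.
have dg := T_op _ _ Tyg; have f0_lin := df0.1; have g_lin := dg.1.
rewrite (linear_funB f0_lin) (linear_funB g_lin) -subr_le0.
(* [t] times the goal is the convexity inequality of [h] at
   [t (x0, f0) + (1 - t) (y, g)], bounded below by the duality pairing. *)
apply: (le0_of_le_small_mul _ (f0 y + g x0 - g y - f0 x0)) => t t0 t1.
have hM' : (h x0 f0 <= M%:E)%E by rewrite hM.
have hyg : (h y g <= (g y)%:E)%E by rewrite h_T.
have := h_cvx x0 f0 y g M (g y) t df0 dg (ltW t0) t1 hM' hyg.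
move/(le_trans (h_ge _ _ (dual_comb t (1 - t) df0 dg))).
rewrite lee_fin !(linear_funD f0_lin) !(linear_funD g_lin).
rewrite !(linear_funZ f0_lin) !(linear_funZ g_lin) -subr_le0 => ineq.
rewrite -subr_le0 -(pmulr_rle0 _ t0); apply: le_trans ineq.
by rewrite le_eqVlt; apply/orP; left; apply/eqP; ring.
Qed.

Let epigraph : set (X * (X -> R) * R^o) :=
  [set u | is_dual u.1.2 /\ (h u.1.1 u.1.2 <= u.2%:E)%E].

Let epigraph_cvx : cvx_set epigraph.
Proof.
have [h_cvx _] := h_fitz.
move=> t [[x1 f1] a1] [[x2 f2] a2] t0 t1 [/= df1 h1] [/= df2 h2].
have -> : t *: (x1, f1, a1) + (1 - t) *: (x2, f2, a2) =
  (t *: x1 + (1 - t) *: x2, fun y => t * f1 y + (1 - t) * f2 y,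
   t * a1 + (1 - t) * a2) by [].
by split; [exact: dual_comb | exact: h_cvx].
Qed.

Lemma fitzpatrick_hull_le {n} {w : 'I_n -> R} {p : 'I_n -> X} {g : 'I_n -> X -> R} :
  (forall i, 0 <= w i) -> \sum_i w i = 1 -> (forall i, T (p i) (g i)) ->
  is_dual (\sum_i w i *: g i) /\
  (h (\sum_i w i *: p i)%R (\sum_i w i *: g i)%R
    <= (\sum_i w i * g i (p i))%R%:E)%E.
Proof.
move=> w0 w1 Tpg.
have [_ [_ [_ h_T]]] := h_fitz.
pose u i : X * (X -> R) * R^o := (p i, g i, g i (p i)).
have u_epi i : epigraph (u i) by split; [exact: T_op _ _ (Tpg i) | rewrite /= h_T].
have : epigraph (\sum_i w i *: u i).
  apply: (convex_hull_min (range u) epigraph_cvx); first by move=> _ [i _ <-].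
  by exists n, w, u; do !split=> // i; exists i.
by rewrite /epigraph /= !fst_sum !snd_sum.
Qed.

End Fitzpatrick.

Lemma closure_sandwich {T : topologicalType} (A B : set T) :
  A `<=` B -> B `<=` closure A -> closure B = closure A.
Proof.
move=> AB BA; apply/seteqP; split; last exact: closure_subset.
have cc : closure (closure A) = closure A by apply/esym/closure_id; exact: closed_closure.
by rewrite -[X in _ `<=` X]cc; exact: closure_subset.
Qed.

(** * Closures of the projections of D(h) *)

Section WeakStarClosure.
Context {R : realType} {X : normedModType R}.

Lemma wstar_closureS (A B : set (X -> R)) :
  A `<=` B -> wstar_closure A `<=` wstar_closure B.
Proof.
move=> AB f [df fA]; split=> // n xs e e0.
by have [g [Ag gf]] := fA n xs e e0; exists g; split=> //; exact: AB.
Qed.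

Lemma wstar_closure_sub (A B : set (X -> R)) :
  B `<=` wstar_closure A -> wstar_closure B `<=` wstar_closure A.
Proof.
move=> BA f [df fB]; split=> // n xs e e0.
have e20 : 0 < e / 2 by rewrite divr_gt0.
have [g [/BA [_ gA] gf]] := fB n xs _ e20.
have [g' [Ag' g'g]] := gA n xs _ e20.
exists g'; split=> // k; rewrite -(subrK (g (xs k)) (g' (xs k))) -addrA (splitr e).
by apply: le_lt_trans (ler_normD _ _) _; apply: ltrD.
Qed.

Lemma wstar_closure_sandwich (A B : set (X -> R)) :
  A `<=` B -> B `<=` wstar_closure A -> wstar_closure B = wstar_closure A.
Proof.
move=> AB BA; apply/seteqP; split; [exact: wstar_closure_sub | exact: wstar_closureS].
Qed.

End WeakStarClosure.

Lemma eval_row_repr {R : realType} {X : normedModType R} {n} (xs : 'I_n -> X)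
    {l : 'rV[R]_n -> R} : linear_fun l ->
  exists w : X, forall g, is_dual g -> g w = l (\row_k g (xs k)).
Proof.
move=> l_lin; exists (\sum_k l (delta_mx 0 k) *: xs k) => g dg.
rewrite (linear_fun_sum dg.1) [\row_k _]row_sum_delta (linear_fun_sum l_lin).
by apply: eq_bigr => k _; rewrite mxE mulrC.
Qed.

Section Domains.
Context {R : realType} {X : normedModType R} {T : operator X}
  {h : X -> (X -> R) -> \bar R}.
Hypotheses (T_max : maximal_monotone T) (h_fitz : fitzpatrick_family T h).

Let T_op : is_operator T := T_max.1.

Lemma conv_hull_dom_sub : conv_hull (dom_op T) `<=` P1_dom h.
Proof.
move=> _ [n [w [p [w0 [w1 [Tp ->]]]]]].
have [g Tpg] := choice (P := fun i f => T (p i) f) Tp.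
have [dg hle] := fitzpatrick_hull_le T_op h_fitz w0 w1 Tpg.
by exists (\sum_i w i *: g i); split=> //; apply: le_lt_trans hle (ltry _).
Qed.

Lemma conv_hull_range_sub : conv_hull_dual (range_op T) `<=` P2_dom h.
Proof.
rewrite conv_hull_dualE => _ [n [w [g [w0 [w1 [Tg ->]]]]]].
have [p Tpg] := choice (P := fun i x => T x (g i)) Tg.
have [dg hle] := fitzpatrick_hull_le T_op h_fitz w0 w1 Tpg.
by split=> //; exists (\sum_i w i *: p i); apply: le_lt_trans hle (ltry _).
Qed.

Lemma P1_dom_sub_closure : P1_dom h `<=` closure (conv_hull (dom_op T)).
Proof.
move=> x0 [f0 [df0 /(fitzpatrick_finite h_fitz df0)[M hM Mge]]].
apply: contrapT => /not_closure_dist[r r0 far].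
have C0 : conv_hull (dom_op T) !=set0.
  have [x [f Txf]] := maximal_monotone_neq0 T_max.
  by exists x; apply: sub_convex_hull; exists f.
have [l [l_lin l_le sep]] := normed_separation (convex_hull_cvx _) C0 r0 far.
pose la := (M - f0 x0) / r.
have la0 : 0 <= la by rewrite divr_ge0 ?subr_ge0 // ltW.
have lar : la * r = M - f0 x0 by rewrite /la divfK ?gt_eqF.
have : T x0 (fun y => 1 * f0 y + la * l y).
  apply: (maximal_monotone_extend T_max) => [|y g Tyg].
    exact: dual_comb _ _ df0 (is_dual_le_norm l_lin l_le).
  have gap := fitzpatrick_gap T_op h_fitz df0 hM Tyg.
  have ly : r <= l (x0 - y).
    rewrite (linear_funB l_lin) lerBrDr addrC sep //.
    by apply: sub_convex_hull; exists g.
  have := ler_wpM2l la0 ly; rewrite lar !mul1r; lra.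
move=> Tx0; have : r <= `|x0 - x0|.
  by apply: far; apply: sub_convex_hull; exists (fun y => 1 * f0 y + la * l y).
by rewrite subrr normr0 leNgt r0.
Qed.

Lemma P2_dom_sub_wstar_closure :
  P2_dom h `<=` wstar_closure (conv_hull_dual (range_op T)).
Proof.
move=> f0 [df0 [x0 /(fitzpatrick_finite h_fitz df0)[M hM Mge]]].
split=> // n xs e e0; apply: contrapT => not_close.
pose Phi (g : X -> R) : 'rV[R]_n := \row_k g (xs k).
pose C := [set Phi g | g in convex_hull (range_op T)].
have far c : C c -> e <= `|Phi f0 - c|.
  move=> [g hull_g <-]; rewrite leNgt; apply/negP => close; apply: not_close.
  exists g; split=> [|k]; first by rewrite conv_hull_dualE.
  apply: le_lt_trans close; rewrite distrC.
  by have := row_entry_le_norm (Phi f0 - Phi g) k; rewrite !mxE.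
have C_cvx : cvx_set C.
  move=> t _ _ t0 t1 [a ha <-] [b hb <-]; exists (t *: a + (1 - t) *: b).
    exact: convex_hull_cvx.
  by apply/rowP => k; rewrite !mxE.
have C0 : C !=set0.
  have [x [f Txf]] := maximal_monotone_neq0 T_max.
  by exists (Phi f), f => //; apply: sub_convex_hull; exists x.
have [l [l_lin _ sep]] := normed_separation C_cvx C0 e0 far.
have [w lw] := eval_row_repr xs l_lin.
pose la := (M - f0 x0) / e.
have la0 : 0 <= la by rewrite divr_ge0 ?subr_ge0 // ltW.
have lae : la * e = M - f0 x0 by rewrite /la divfK ?gt_eqF.
have : T (x0 + la *: w) f0.
  apply: (maximal_monotone_extend T_max df0) => y g Tyg.
  have dg := T_op _ _ Tyg.
  have gap := fitzpatrick_gap T_op h_fitz df0 hM Tyg.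
  have gw : e <= f0 w - g w.
    rewrite lw // lw // lerBrDr addrC sep //.
    by exists g => //; apply: sub_convex_hull; exists y.
  have := ler_wpM2l la0 gw; rewrite lae.
  rewrite !(linear_funB df0.1) !(linear_funB dg.1) in gap *.
  rewrite !(linear_funD df0.1) !(linear_funD dg.1).
  by rewrite !(linear_funZ df0.1) !(linear_funZ dg.1); lra.
move=> Tf0; have : l (Phi f0) + e <= l (Phi f0).
  by apply: sep; exists f0 => //; apply: sub_convex_hull; exists (x0 + la *: w).
by rewrite gerDl leNgt e0.
Qed.

End Domains.

Theorem lemma4p1 (R : realType) (X : completeNormedModType R)
  (T : operator X) (h : X -> (X -> R) -> \bar R) :
  maximal_monotone T -> fitzpatrick_family T h ->
  closure (P1_dom h) = closure (conv_hull (dom_op T)) /\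
  wstar_closure (P2_dom h) = wstar_closure (conv_hull_dual (range_op T)).
Proof.
move=> T_max h_fitz; split.
  apply: closure_sandwich; [exact: conv_hull_dom_sub | exact: P1_dom_sub_closure].
apply: wstar_closure_sandwich;
  [exact: conv_hull_range_sub | exact: P2_dom_sub_wstar_closure].
Qed.
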